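(* There exist constants $C,K>0$ such that for all $x\in\mathbb Z_{\ge0}$, all integers $N\ge n\ge0$ and all $a\ge0$, $$\sum_{y\ge0}\mathfrak p^N_n(x,y)\,e^{ay}=\mathbf E^N_x[e^{aS_n}]\le C\,e^{ax+Ka^2n}.$$
   Context: Let $p_n(z)$ be the probability that simple symmetric random walk on $\mathbb Z$ started at $0$ is at $z$ at time $n$. For $x,y\in\mathbb Z_{\ge0}$ set $p^{(1/2)}_n(x,y)=p_n(x-y)-p_n(x+y+2)$, $\psi(x;n)=\sum_{y\ge0}p^{(1/2)}_n(x,y)$, and for $0\le n\le N$, $\mathfrak p^N_n(x,y)=p^{(1/2)}_n(x,y)\,\psi(y;N-n)/\psi(x;N)$. $\mathbf P^N_x$ is the uniform probability measure on paths $(s_0,\dots,s_N)\in\mathbb Z_{\ge0}^{N+1}$ with $s_0=x$ and $|s_{i+1}-s_i|=1$; $S$ is its coordinate process and $\mathbf E^N_x$ its expectation (so that $\mathbf P^N_x(S_n=y)=\mathfrak p^N_n(x,y)$). *)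

From Stdlib Require Import Reals ZArith List.
Import ListNotations.
Open Scope R_scope.

(* p_n(z): probability that simple symmetric random walk on Z started at 0
   is at z at time n, i.e. C(n,(n+z)/2) / 2^n when |z| <= n and n+z even. *)
Definition pSRW (n : nat) (z : Z) : R :=
  if ((Z.abs z <=? Z.of_nat n)%Z && Z.even (Z.of_nat n + z))%bool
  then Binomial.C n (Z.to_nat ((Z.of_nat n + z) / 2)) / 2 ^ n
  else 0.

Definition phalf (n x y : nat) : R :=
  pSRW n (Z.of_nat x - Z.of_nat y)%Z - pSRW n (Z.of_nat x + Z.of_nat y + 2)%Z.

(* psi(x;n) = sum_{y>=0} p^{(1/2)}_n(x,y).  The terms vanish for y > x+n
   (both |x-y| > n and x+y+2 > n), so the series is the finite sum over
   y = 0 .. x+n. *)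
Definition psi (x n : nat) : R :=
  sum_f_R0 (fun y => phalf n x y) (x + n).

Definition pfrak (N n x y : nat) : R :=
  phalf n x y * psi y (N - n) / psi x N.

Fixpoint all_steps (N : nat) : list (list Z) :=
  match N with
  | O => [ [] ]
  | S k => flat_map (fun l => [ (1 :: l)%Z ; (-1 :: l)%Z ]) (all_steps k)
  end.

Fixpoint nonneg_path (x : Z) (steps : list Z) : bool :=
  ((0 <=? x)%Z && match steps with
                  | [] => true
                  | s :: r => nonneg_path (x + s)%Z r
                  end)%bool.

Definition pos_at (x : Z) (steps : list Z) (n : nat) : Z :=
  (x + fold_right Z.add 0 (firstn n steps))%Z.

(* Admissible paths (s_0,...,s_N) in Z_{>=0}^{N+1} with s_0 = x and
   |s_{i+1}-s_i| = 1, encoded by their step sequences. *)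
Definition adm_paths (N : nat) (x : Z) : list (list Z) :=
  filter (nonneg_path x) (all_steps N).

(* E^N_x[f(S_n)] under the uniform probability measure P^N_x on admissible paths. *)
Definition EN (N : nat) (x : nat) (n : nat) (f : Z -> R) : R :=
  fold_right Rplus 0 (map (fun st => f (pos_at (Z.of_nat x) st n))
                          (adm_paths N (Z.of_nat x)))
  / INR (length (adm_paths N (Z.of_nat x))).

From Stdlib Require Import Reals ZArith List Lia Lra Classical.
Open Scope R_scope.

(* Write L_m(y) for the number of admissible paths of length m from y.  By the
   Markov property and the reflection principle, the admissible paths of
   length N from x with S_n = y number 2^n p^{(1/2)}_n(x,y) L_{N-n}(y); in
   particular psi(y;m) = L_m(y)/2^m, so the series in the statement has
   finitely many nonzero terms and sums to E^N_x[e^{aS_n}].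

   For the bound, write E^N_x[e^{aS_n}] = sum w l g / sum w l with
   w(y) = p^{(1/2)}_n(x,y)(y+1), l(y) = L_{N-n}(y)/(y+1) and g(y) = e^{ay}.
   Discrete concavity of L_{N-n} makes l nonincreasing, g is nondecreasing,
   so Chebyshev's sum inequality bounds the ratio by sum w g / sum w.  Both
   sums are moments of the walk killed at -1; extending (y+1) and
   (y+1)e^{a(y+1)} to odd functions of y+1 (method of images) turns them into
   free-walk sums, giving sum w = x+1 and
   sum w g <= 4 (x+1) e^{ax} cosh(2a)^n <= 4 (x+1) e^{ax} e^{8a^2 n}. *)

Definition reachable (n : nat) (z : Z) : Prop :=
  exists k, (k <= n)%nat /\ z = (2 * Z.of_nat k - Z.of_nat n)%Z.

Lemma pSRW_reachable n k : (k <= n)%nat ->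
  pSRW n (2 * Z.of_nat k - Z.of_nat n) = Binomial.C n k / 2 ^ n.
Proof.
  intros Hk. unfold pSRW.
  replace (Z.abs (2 * Z.of_nat k - Z.of_nat n) <=? Z.of_nat n)%Z with true
    by (symmetry; apply Z.leb_le; lia).
  replace (Z.of_nat n + (2 * Z.of_nat k - Z.of_nat n))%Z with (Z.of_nat k * 2)%Z by ring.
  rewrite Z.even_mul, Bool.orb_true_r, Z.div_mul, Nat2Z.id by lia.
  reflexivity.
Qed.

Lemma pSRW_unreachable n z : ~ reachable n z -> pSRW n z = 0.
Proof.
  intros Hz. unfold pSRW.
  destruct (Z.abs z <=? Z.of_nat n)%Z eqn:Habs; [|reflexivity].
  destruct (Z.even (Z.of_nat n + z)) eqn:Heven; [|reflexivity].
  exfalso. apply Z.leb_le in Habs. apply Z.even_spec in Heven.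
  destruct Heven as [m Hm]. apply Hz. exists (Z.to_nat m). split; lia.
Qed.

Lemma binomial_n_0 n : Binomial.C n 0 = 1.
Proof.
  unfold Binomial.C. rewrite Nat.sub_0_r. simpl fact. rewrite INR_1.
  field. apply INR_fact_neq_0.
Qed.

Lemma binomial_n_n n : Binomial.C n n = 1.
Proof.
  unfold Binomial.C. rewrite Nat.sub_diag. simpl fact. rewrite INR_1.
  field. apply INR_fact_neq_0.
Qed.

(* One step of the free walk: p_{n+1}(z) = (p_n(z-1) + p_n(z+1)) / 2; this is
   Pascal's rule for binomial coefficients. *)
Lemma pSRW_step n z : pSRW (S n) z = (pSRW n (z - 1) + pSRW n (z + 1)) / 2.
Proof.
  assert (H2n : 2 ^ n <> 0) by (apply pow_nonzero; lra).
  destruct (classic (reachable (S n) z)) as [[k [Hk ->]] | Hz].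
  - rewrite pSRW_reachable by lia.
    destruct k as [|j].
    + rewrite (pSRW_unreachable n (_ - 1)) by (intros [k [Hk1 Hk2]]; lia).
      replace (2 * Z.of_nat 0 - Z.of_nat (S n) + 1)%Z with (2 * Z.of_nat 0 - Z.of_nat n)%Z
        by lia.
      rewrite pSRW_reachable, !binomial_n_0 by lia. simpl. field. exact H2n.
    + replace (2 * Z.of_nat (S j) - Z.of_nat (S n) - 1)%Z with (2 * Z.of_nat j - Z.of_nat n)%Z
        by lia.
      rewrite pSRW_reachable by lia.
      destruct (Nat.eq_dec j n) as [-> | Hjn].
      * rewrite (pSRW_unreachable n (_ + 1)) by (intros [k [Hk1 Hk2]]; lia).
        rewrite !binomial_n_n. simpl. field. exact H2n.
      * replace (2 * Z.of_nat (S j) - Z.of_nat (S n) + 1)%Z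
          with (2 * Z.of_nat (S j) - Z.of_nat n)%Z by lia.
        rewrite pSRW_reachable, <- pascal by lia. simpl. field. exact H2n.
  - rewrite (pSRW_unreachable (S n) z Hz).
    rewrite (pSRW_unreachable n (z - 1)) by (intros [k [Hk Hk']]; apply Hz; exists (S k); split; lia).
    rewrite (pSRW_unreachable n (z + 1)) by (intros [k [Hk Hk']]; apply Hz; exists k; split; lia).
    lra.
Qed.

Lemma pSRW_sym n z : pSRW n (- z) = pSRW n z.
Proof.
  destruct (classic (reachable n z)) as [[k [Hk ->]] | Hz].
  - replace (- (2 * Z.of_nat k - Z.of_nat n))%Z with (2 * Z.of_nat (n - k) - Z.of_nat n)%Z
      by lia.
    rewrite !pSRW_reachable, <- pascal_step1 by lia. reflexivity.
  - rewrite (pSRW_unreachable n z Hz). apply pSRW_unreachable.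
    intros [k [Hk Hk']]. apply Hz. exists (n - k)%nat. split; lia.
Qed.

Lemma pSRW_init z : pSRW 0 z = if Z.eq_dec z 0 then 1 else 0.
Proof.
  destruct (Z.eq_dec z 0) as [-> | Hz].
  - pose proof (pSRW_reachable 0 0 (le_n 0)) as H. simpl in H.
    rewrite H, binomial_n_0. lra.
  - apply pSRW_unreachable. intros [k [Hk Hk']]. lia.
Qed.

(* walk_sum n h z is the sum of h(z + s_1 + ... + s_n) over the 2^n sign
   sequences s in {+1,-1}^n, i.e. 2^n E[h(z + S_n)] for the free walk. *)
Fixpoint walk_sum (n : nat) (h : Z -> R) (z : Z) : R :=
  match n with
  | O => h z
  | S m => walk_sum m h (z + 1) + walk_sum m h (z - 1)
  end.

Lemma walk_sum_le n h1 h2 :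
  (forall z, h1 z <= h2 z) -> forall x, walk_sum n h1 x <= walk_sum n h2 x.
Proof.
  intros H. induction n as [|n IH]; intros x; simpl; [apply H|].
  pose proof (IH (x + 1)%Z). pose proof (IH (x - 1)%Z). lra.
Qed.

Lemma walk_sum_add n h1 h2 x :
  walk_sum n (fun z => h1 z + h2 z) x = walk_sum n h1 x + walk_sum n h2 x.
Proof. revert x. induction n as [|n IH]; intros x; simpl; [|rewrite !IH]; ring. Qed.

Lemma walk_sum_scal n c h x : walk_sum n (fun z => c * h z) x = c * walk_sum n h x.
Proof. revert x. induction n as [|n IH]; intros x; simpl; [|rewrite !IH]; ring. Qed.

Lemma walk_sum_shift n h c x : walk_sum n (fun z => h (z + c)%Z) x = walk_sum n h (x + c)%Z.
Proof.
  revert x. induction n as [|n IH]; intros x; simpl; [reflexivity|].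
  rewrite !IH. f_equal; f_equal; ring.
Qed.

Lemma walk_sum_antisym n h c :
  (forall z, h (c - z)%Z = - h z) -> forall z, walk_sum n h (c - z)%Z = - walk_sum n h z.
Proof.
  intros Hh. induction n as [|n IH]; intros z; simpl; [apply Hh|].
  replace (c - z + 1)%Z with (c - (z - 1))%Z by ring.
  replace (c - z - 1)%Z with (c - (z + 1))%Z by ring.
  rewrite !IH. ring.
Qed.

Lemma walk_sum_center n h c : (forall z, h (2 * c - z)%Z = - h z) -> walk_sum n h c = 0.
Proof.
  intros Hh. pose proof (walk_sum_antisym n h (2 * c) Hh c) as H.
  replace (2 * c - c)%Z with c in H by ring. lra.
Qed.

Lemma walk_sum_exp t n x :
  walk_sum n (fun z => exp (t * IZR z)) x = exp (t * IZR x) * (exp t + exp (- t)) ^ n.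
Proof.
  revert x. induction n as [|n IH]; intros x; simpl; [ring|].
  rewrite !IH, plus_IZR, minus_IZR.
  replace (t * (IZR x + 1)) with (t * IZR x + t) by ring.
  replace (t * (IZR x - 1)) with (t * IZR x + - t) by ring.
  rewrite !exp_plus. ring.
Qed.

Lemma walk_sum_affine c n x : walk_sum n (fun z => IZR z + c) x = 2 ^ n * (IZR x + c).
Proof.
  revert x. induction n as [|n IH]; intros x; simpl; [ring|].
  rewrite !IH, plus_IZR, minus_IZR. ring.
Qed.

(* p^{(1/2)}_n(x,y) for an integer starting point x.  It vanishes at x = -1,
   which encodes the killing of the walk when it leaves Z_{>=0}. *)
Definition pkill (n : nat) (x : Z) (y : nat) : R :=
  pSRW n (x - Z.of_nat y) - pSRW n (x + Z.of_nat y + 2).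

Lemma phalf_pkill n x y : phalf n x y = pkill n (Z.of_nat x) y.
Proof. reflexivity. Qed.

Lemma pkill_step n x y : pkill (S n) x y = (pkill n (x + 1) y + pkill n (x - 1) y) / 2.
Proof.
  unfold pkill. rewrite !pSRW_step.
  replace (x + 1 - Z.of_nat y)%Z with (x - Z.of_nat y + 1)%Z by ring.
  replace (x - 1 - Z.of_nat y)%Z with (x - Z.of_nat y - 1)%Z by ring.
  replace (x + 1 + Z.of_nat y + 2)%Z with (x + Z.of_nat y + 2 + 1)%Z by ring.
  replace (x - 1 + Z.of_nat y + 2)%Z with (x + Z.of_nat y + 2 - 1)%Z by ring.
  lra.
Qed.

Lemma pkill_absorbed n y : pkill n (-1) y = 0.
Proof.
  unfold pkill. replace (-1 - Z.of_nat y)%Z with (- (-1 + Z.of_nat y + 2))%Z by ring.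
  rewrite pSRW_sym. ring.
Qed.

Lemma pkill_init (x y : nat) : pkill 0 (Z.of_nat x) y = if Nat.eq_dec y x then 1 else 0.
Proof.
  unfold pkill. rewrite !pSRW_init.
  destruct (Z.eq_dec (Z.of_nat x + Z.of_nat y + 2) 0) as [H|_]; [lia|].
  destruct (Z.eq_dec (Z.of_nat x - Z.of_nat y) 0), (Nat.eq_dec y x); lia || lra.
Qed.

Lemma pkill_nonneg n x y : (-1 <= x)%Z -> 0 <= pkill n x y.
Proof.
  revert x. induction n as [|n IH]; intros x Hx;
    (destruct (Z.eq_dec x (-1)) as [-> | Hne]; [rewrite pkill_absorbed; lra|]).
  - replace x with (Z.of_nat (Z.to_nat x)) by lia.
    rewrite pkill_init. destruct Nat.eq_dec; lra.
  - rewrite pkill_step.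
    pose proof (IH (x + 1)%Z ltac:(lia)). pose proof (IH (x - 1)%Z ltac:(lia)). lra.
Qed.

(* sum_{y <= M} p^{(1/2)}_n(x,y) c(y); the kernel vanishes for y > x + n, so
   any cutoff M >= x + n gives the full series. *)
Definition killed_sum (n : nat) (x : Z) (c : nat -> R) (M : nat) : R :=
  sum_f_R0 (fun y => pkill n x y * c y) M.

Lemma killed_sum_absorbed n c M : killed_sum n (-1) c M = 0.
Proof. apply sum_eq_R0. intros y _. rewrite pkill_absorbed. ring. Qed.

Lemma killed_sum_step n x c M :
  killed_sum (S n) x c M = (killed_sum n (x + 1) c M + killed_sum n (x - 1) c M) / 2.
Proof.
  unfold killed_sum.
  rewrite (sum_eq _ (fun y => (pkill n (x + 1) y * c y + pkill n (x - 1) y * c y) * / 2))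
    by (intros y _; rewrite pkill_step; field).
  rewrite <- scal_sum, plus_sum. field.
Qed.

Lemma sum_f_R0_single (f : nat -> R) k M :
  (k <= M)%nat -> (forall y, y <> k -> f y = 0) -> sum_f_R0 f M = f k.
Proof.
  intros Hk Hf. induction M as [|M IH].
  - replace k with 0%nat by lia. reflexivity.
  - rewrite tech5. destruct (Nat.eq_dec k (S M)) as [-> | Hne].
    + rewrite sum_eq_R0 by (intros; apply Hf; lia). ring.
    + rewrite IH, (Hf (S M)) by lia. ring.
Qed.

Lemma killed_sum_init (x : nat) c M : (x <= M)%nat -> killed_sum 0 (Z.of_nat x) c M = c x.
Proof.
  intros Hx. unfold killed_sum. rewrite (sum_f_R0_single _ x M Hx).
  - rewrite pkill_init. destruct Nat.eq_dec; [ring | congruence].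
  - intros y Hy. rewrite pkill_init. destruct Nat.eq_dec; [congruence | ring].
Qed.

Lemma killed_sum_unique (G : nat -> Z -> R) (c : nat -> R) (M : nat) :
  (forall n, G n (-1)%Z = 0) ->
  (forall x : nat, G 0%nat (Z.of_nat x) = c x) ->
  (forall n x, (0 <= x)%Z -> G (S n) x = (G n (x + 1)%Z + G n (x - 1)%Z) / 2) ->
  forall n x, (-1 <= x)%Z -> (x + Z.of_nat n <= Z.of_nat M)%Z ->
  G n x = killed_sum n x c M.
Proof.
  intros Habs Hinit Hstep n. induction n as [|n IH]; intros x Hx HM;
    (destruct (Z.eq_dec x (-1)) as [-> | Hne];
     [rewrite Habs, killed_sum_absorbed; reflexivity|]).
  - replace x with (Z.of_nat (Z.to_nat x)) by lia.
    rewrite Hinit, killed_sum_init by lia. reflexivity.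
  - rewrite Hstep, killed_sum_step, !IH by lia. reflexivity.
Qed.

Lemma killed_sum_images (Psi : Z -> R) M n x :
  (forall z, Psi (-2 - z)%Z = - Psi z) ->
  (-1 <= x)%Z -> (x + Z.of_nat n <= Z.of_nat M)%Z ->
  killed_sum n x (fun y => Psi (Z.of_nat y)) M = walk_sum n Psi x / 2 ^ n.
Proof.
  intros HPsi Hx HM. symmetry.
  apply (killed_sum_unique (fun n x => walk_sum n Psi x / 2 ^ n)); auto.
  - intros k. rewrite walk_sum_center; [lra|].
    intros z. replace (2 * -1 - z)%Z with (-2 - z)%Z by ring. apply HPsi.
  - intros z. simpl. lra.
  - intros k z _. simpl. field. apply pow_nonzero. lra.
Qed.

Lemma killed_sum_linear M n (x : nat) : (x + n <= M)%nat ->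
  killed_sum n (Z.of_nat x) (fun y => INR y + 1) M = INR x + 1.
Proof.
  intros HM.
  transitivity (killed_sum n (Z.of_nat x) (fun y => IZR (Z.of_nat y) + 1) M).
  { apply sum_eq. intros y _. rewrite <- INR_IZR_INZ. reflexivity. }
  rewrite (killed_sum_images (fun z => IZR z + 1)) by
    (intros; rewrite ?minus_IZR; first [simpl; lra | lia]).
  rewrite walk_sum_affine, <- INR_IZR_INZ. field. apply pow_nonzero. lra.
Qed.

Definition lsum (F : list Z -> R) (l : list (list Z)) : R := fold_right Rplus 0 (map F l).

Definition npaths (N : nat) (x : Z) : R := lsum (fun _ => 1) (adm_paths N x).

Definition path_sum (N : nat) (x : Z) (n : nat) (f : Z -> R) : R :=
  lsum (fun st => f (pos_at x st n)) (adm_paths N x).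

Lemma lsum_ext F G l : (forall s, F s = G s) -> lsum F l = lsum G l.
Proof. intros H. unfold lsum. induction l as [|s l IH]; simpl; [|rewrite H, IH]; reflexivity. Qed.

Lemma lsum_adm_paths_succ F k x :
  lsum F (adm_paths (S k) x) =
  if (0 <=? x)%Z
  then lsum (fun l => F (1%Z :: l)) (adm_paths k (x + 1))
       + lsum (fun l => F ((-1)%Z :: l)) (adm_paths k (x - 1))
  else 0.
Proof.
  unfold adm_paths, lsum. simpl all_steps. induction (all_steps k) as [|l ls IH].
  - simpl. destruct (0 <=? x)%Z; simpl; ring.
  - simpl. replace (x + -1)%Z with (x - 1)%Z by ring.
    destruct (0 <=? x)%Z; simpl; [|exact IH].
    destruct (nonneg_path (x + 1) l), (nonneg_path (x - 1) l); simpl; rewrite IH; ring.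
Qed.

Lemma adm_paths_neg N x : (x < 0)%Z -> adm_paths N x = nil.
Proof.
  intros Hx. unfold adm_paths. induction (all_steps N) as [|l ls IH]; simpl; [reflexivity|].
  destruct l; simpl; replace (0 <=? x)%Z with false by (symmetry; apply Z.leb_gt; lia);
    exact IH.
Qed.

Lemma npaths_succ k x :
  npaths (S k) x = if (0 <=? x)%Z then npaths k (x + 1) + npaths k (x - 1) else 0.
Proof. apply lsum_adm_paths_succ. Qed.

Lemma npaths_neg N x : (x < 0)%Z -> npaths N x = 0.
Proof. intros Hx. unfold npaths. rewrite adm_paths_neg by exact Hx. reflexivity. Qed.

Lemma npaths_init x : (0 <= x)%Z -> npaths 0 x = 1.
Proof.
  intros Hx. unfold npaths, adm_paths, lsum. simpl.
  replace (0 <=? x)%Z with true by (symmetry; apply Z.leb_le; lia). simpl. ring.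
Qed.

Lemma npaths_nonneg N x : 0 <= npaths N x.
Proof. unfold npaths, lsum. induction (adm_paths N x); simpl; lra. Qed.

(* From x >= 0 the path that always steps up is admissible. *)
Lemma npaths_ge_1 N x : (0 <= x)%Z -> 1 <= npaths N x.
Proof.
  revert x. induction N as [|N IH]; intros x Hx; [rewrite npaths_init by lia; lra|].
  rewrite npaths_succ. replace (0 <=? x)%Z with true by (symmetry; apply Z.leb_le; lia).
  pose proof (IH (x + 1)%Z ltac:(lia)). pose proof (npaths_nonneg N (x - 1)). lra.
Qed.

Lemma path_sum_succ k x n f :
  path_sum (S k) x (S n) f =
  if (0 <=? x)%Z then path_sum k (x + 1) n f + path_sum k (x - 1) n f else 0.
Proof.
  unfold path_sum. rewrite lsum_adm_paths_succ. destruct (0 <=? x)%Z; [|reflexivity].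
  f_equal; apply lsum_ext; intros s; unfold pos_at; cbn [firstn fold_right]; f_equal; ring.
Qed.

Lemma path_sum_init N x f : path_sum N x 0 f = f x * npaths N x.
Proof.
  unfold path_sum, npaths, lsum. induction (adm_paths N x) as [|s l IH]; simpl; [ring|].
  rewrite IH. unfold pos_at. simpl. rewrite Z.add_0_r. ring.
Qed.

Lemma path_sum_kernel N n x f M : (n <= N)%nat -> (-1 <= x)%Z ->
  (x + Z.of_nat n <= Z.of_nat M)%Z ->
  path_sum N x n f
  = 2 ^ n * killed_sum n x (fun y => npaths (N - n) (Z.of_nat y) * f (Z.of_nat y)) M.
Proof.
  intros HN Hx HM. set (m := (N - n)%nat).
  assert (H2 : forall k, 2 ^ k <> 0) by (intros; apply pow_nonzero; lra).
  set (G := fun k z => path_sum (m + k) z k f / 2 ^ k).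
  assert (Habs : forall k, G k (-1)%Z = 0).
  { intros k. unfold G, path_sum. rewrite adm_paths_neg by lia. unfold lsum. simpl. unfold Rdiv. ring. }
  assert (Hinit : forall y : nat,
             G 0%nat (Z.of_nat y) = npaths m (Z.of_nat y) * f (Z.of_nat y)).
  { intros y. unfold G. simpl. rewrite Nat.add_0_r, path_sum_init. field. }
  assert (Hstep : forall k z, (0 <= z)%Z -> G (S k) z = (G k (z + 1)%Z + G k (z - 1)%Z) / 2).
  { intros k z Hz. unfold G. rewrite Nat.add_succ_r, path_sum_succ.
    replace (0 <=? z)%Z with true by (symmetry; apply Z.leb_le; lia). simpl. field. apply H2. }
  rewrite <- (killed_sum_unique G _ M Habs Hinit Hstep n x Hx HM). unfold G.
  replace (m + n)%nat with N by lia. field. apply H2.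
Qed.

Lemma psi_npaths y m : psi y m = npaths m (Z.of_nat y) / 2 ^ m.
Proof.
  change (npaths m (Z.of_nat y)) with (path_sum m (Z.of_nat y) m (fun _ => 1)).
  rewrite (path_sum_kernel m m (Z.of_nat y) (fun _ => 1) (y + m)) by lia.
  rewrite Nat.sub_diag.
  replace (killed_sum m (Z.of_nat y) _ (y + m)) with (psi y m).
  - field. apply pow_nonzero. lra.
  - apply sum_eq. intros i _. rewrite npaths_init by lia. rewrite phalf_pkill. ring.
Qed.

Lemma EN_path_sum N x n f :
  EN N x n f = path_sum N (Z.of_nat x) n f / npaths N (Z.of_nat x).
Proof.
  unfold EN. f_equal. unfold npaths, lsum.
  induction (adm_paths N (Z.of_nat x)) as [|s l IH]; simpl length; [reflexivity|].
  rewrite S_INR, IH. simpl. ring.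
Qed.

Lemma pfrak_partial_sum N n x (f : Z -> R) M : (n <= N)%nat -> (x + n <= M)%nat ->
  sum_f_R0 (fun y => pfrak N n x y * f (Z.of_nat y)) M = EN N x n f.
Proof.
  intros HN HM.
  rewrite EN_path_sum, (path_sum_kernel N n (Z.of_nat x) f M) by lia.
  pose proof (npaths_ge_1 N (Z.of_nat x) ltac:(lia)) as HL.
  unfold Rdiv. rewrite Rmult_comm, <- Rmult_assoc. unfold killed_sum. rewrite scal_sum.
  apply sum_eq. intros y _. unfold pfrak. rewrite !psi_npaths, phalf_pkill.
  replace (2 ^ N) with (2 ^ n * 2 ^ (N - n)) by (rewrite <- pow_add; f_equal; lia).
  field. repeat split; try apply pow_nonzero; lra.
Qed.

Lemma npaths_concave m z : (0 <= z)%Z -> npaths m (z + 1) + npaths m (z - 1) <= 2 * npaths m z.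
Proof.
  revert z. induction m as [|m IH]; intros z Hz.
  - rewrite (npaths_init (z + 1)), (npaths_init z) by lia.
    destruct (Z.eq_dec z 0) as [-> | Hne].
    + rewrite npaths_neg by lia. lra.
    + rewrite npaths_init by lia. lra.
  - rewrite !npaths_succ.
    replace (0 <=? z + 1)%Z with true by (symmetry; apply Z.leb_le; lia).
    replace (0 <=? z)%Z with true by (symmetry; apply Z.leb_le; lia).
    pose proof (IH (z + 1)%Z ltac:(lia)).
    destruct (Z.eq_dec z 0) as [-> | Hne].
    + rewrite (npaths_neg m (0 - 1)) by lia. simpl in *. lra.
    + replace (0 <=? z - 1)%Z with true by (symmetry; apply Z.leb_le; lia).
      pose proof (IH (z - 1)%Z ltac:(lia)). lra.
Qed.

(* Hence L_m(y)/(y+1) is nonincreasing in y: the one-step comparison. *)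
Lemma npaths_ratio m (y : nat) :
  (INR y + 1) * npaths m (Z.of_nat y + 1) <= (INR y + 2) * npaths m (Z.of_nat y).
Proof.
  induction y as [|y IH].
  - pose proof (npaths_concave m 0 ltac:(lia)) as H.
    rewrite (npaths_neg m (0 - 1)) in H by lia. simpl in *. lra.
  - rewrite Nat2Z.inj_succ, S_INR, <- Z.add_1_r.
    pose proof (npaths_concave m (Z.of_nat y + 1) ltac:(lia)) as H.
    replace (Z.of_nat y + 1 - 1)%Z with (Z.of_nat y) in H by ring.
    pose proof (pos_INR y).
    assert ((INR y + 2) * (npaths m (Z.of_nat y + 1 + 1) + npaths m (Z.of_nat y))
            <= (INR y + 2) * (2 * npaths m (Z.of_nat y + 1)))
      by (apply Rmult_le_compat_l; lra).
    lra.
Qed.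

Definition npaths_per_site (m y : nat) : R := npaths m (Z.of_nat y) / (INR y + 1).

Lemma npaths_per_site_antitone m i j : (i <= j)%nat ->
  npaths_per_site m j <= npaths_per_site m i.
Proof.
  induction 1 as [|j Hij IH]; [lra|].
  eapply Rle_trans; [|exact IH]. unfold npaths_per_site.
  pose proof (npaths_ratio m j). pose proof (pos_INR j).
  rewrite Nat2Z.inj_succ, S_INR, <- Z.add_1_r.
  apply Rmult_le_reg_r with ((INR j + 1) * (INR j + 1 + 1)); [nra|].
  replace (npaths m (Z.of_nat j + 1) / (INR j + 1 + 1) * ((INR j + 1) * (INR j + 1 + 1)))
    with ((INR j + 1) * npaths m (Z.of_nat j + 1)) by (field; lra).
  replace (npaths m (Z.of_nat j) / (INR j + 1) * ((INR j + 1) * (INR j + 1 + 1)))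
    with ((INR j + 2) * npaths m (Z.of_nat j)) by (field; lra).
  lra.
Qed.

Lemma chebyshev_sum M (w l g : nat -> R) :
  (forall i, (i <= M)%nat -> 0 <= w i) ->
  (forall i j, (i <= j)%nat -> (j <= M)%nat -> l j <= l i) ->
  (forall i j, (i <= j)%nat -> (j <= M)%nat -> g i <= g j) ->
  sum_f_R0 (fun i => w i * l i * g i) M * sum_f_R0 w M
  <= sum_f_R0 (fun i => w i * g i) M * sum_f_R0 (fun i => w i * l i) M.
Proof.
  induction M as [|M IH]; intros Hw Hl Hg; [simpl; nra|].
  rewrite !tech5.
  specialize (IH ltac:(auto) ltac:(auto) ltac:(auto)).
  set (lM := l (S M)). set (gM := g (S M)).
  (* The new term is negatively correlated with each earlier one. *)
  assert (Hcross : sum_f_R0 (fun i => w i * (l i - lM) * (g i - gM)) M <= 0).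
  { rewrite <- (sum_eq_R0 (fun _ => 0) M) by reflexivity.
    apply sum_Rle. intros i Hi.
    pose proof (Hw i ltac:(lia)). pose proof (Hl i (S M) ltac:(lia) ltac:(lia)).
    pose proof (Hg i (S M) ltac:(lia) ltac:(lia)).
    assert (0 <= w i * (l i - lM)) by (apply Rmult_le_pos; unfold lM; lra).
    unfold lM, gM in *. nra. }
  assert (Hexpand : sum_f_R0 (fun i => w i * (l i - lM) * (g i - gM)) M
    = sum_f_R0 (fun i => w i * l i * g i) M - gM * sum_f_R0 (fun i => w i * l i) M
      - lM * sum_f_R0 (fun i => w i * g i) M + lM * gM * sum_f_R0 w M).
  { clearbody lM gM. clear - lM gM. induction M as [|M IH]; simpl; [|rewrite IH]; ring. }
  pose proof (Hw (S M) (le_n _)).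
  rewrite Hexpand in Hcross. fold lM gM. nra.
Qed.

Lemma chebyshev_ratio M (w l g : nat -> R) :
  (forall i, (i <= M)%nat -> 0 <= w i) ->
  (forall i j, (i <= j)%nat -> (j <= M)%nat -> l j <= l i) ->
  (forall i j, (i <= j)%nat -> (j <= M)%nat -> g i <= g j) ->
  0 < sum_f_R0 w M -> 0 < sum_f_R0 (fun i => w i * l i) M ->
  sum_f_R0 (fun i => w i * l i * g i) M / sum_f_R0 (fun i => w i * l i) M
  <= sum_f_R0 (fun i => w i * g i) M / sum_f_R0 w M.
Proof.
  intros Hw Hl Hg Hsw Hswl. pose proof (chebyshev_sum M w l g Hw Hl Hg) as Hcheb.
  set (Sw := sum_f_R0 w M) in *. set (Swl := sum_f_R0 (fun i => w i * l i) M) in *.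
  apply (Rmult_le_reg_r (Sw * Swl)); [apply Rmult_lt_0_compat; assumption|].
  unfold Rdiv.
  replace (sum_f_R0 (fun i => w i * l i * g i) M * / Swl * (Sw * Swl))
    with (sum_f_R0 (fun i => w i * l i * g i) M * Sw) by (field; lra).
  replace (sum_f_R0 (fun i => w i * g i) M * / Sw * (Sw * Swl))
    with (sum_f_R0 (fun i => w i * g i) M * Swl) by (field; lra).
  exact Hcheb.
Qed.

Lemma exp_le_compat x y : x <= y -> exp x <= exp y.
Proof. intros [H | ->]; [left; apply exp_increasing; exact H | right; reflexivity]. Qed.

Lemma exp_diff_le s t : t <= s -> exp s - exp t <= (s - t) * exp s.
Proof.
  intros Hts. pose proof (exp_ineq1_le (t - s)) as H.
  replace (exp t) with (exp (t - s) * exp s) by (rewrite <- exp_plus; f_equal; ring).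
  pose proof (exp_pos s). nra.
Qed.

Lemma cosh_bound t : 0 <= t -> exp t + exp (- t) <= 2 * exp (2 * t ^ 2).
Proof.
  intros Ht. pose proof (exp_ineq1_le (2 * t ^ 2)) as Hsq.
  destruct (Rle_lt_dec (1 / 2) t) as [Hbig | Hsmall].
  - assert (exp (- t) <= exp t) by (apply exp_le_compat; lra).
    assert (exp t <= exp (2 * t ^ 2)) by (apply exp_le_compat; nra). lra.
  - (* For t < 1/2, compare with the second-order Taylor polynomials, using
       e^t (1 - t) <= 1 and e^{-t} (1 + t) <= 1. *)
    pose proof (exp_ineq1_le (- t)) as Hm. pose proof (exp_ineq1_le t) as Hp.
    assert (Hinv : exp t * exp (- t) = 1)
      by (rewrite <- exp_plus; replace (t + - t) with 0 by ring; apply exp_0).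
    pose proof (exp_pos t). pose proof (exp_pos (- t)).
    assert (exp t * (1 - t) <= 1) by nra.
    assert (exp (- t) * (1 + t) <= 1) by nra.
    assert (exp t <= 1 + t + 2 * t ^ 2).
    { assert ((exp t - (1 + t + 2 * t ^ 2)) * (1 - t) <= 0) by nra. nra. }
    assert (exp (- t) <= 1 - t + t ^ 2).
    { assert ((exp (- t) - (1 - t + t ^ 2)) * (1 + t) <= 0) by nra. nra. }
    nra.
Qed.

Lemma cosh_pow_bound t n : 0 <= t -> ((exp t + exp (- t)) / 2) ^ n <= exp (2 * t ^ 2 * INR n).
Proof.
  intros Ht. induction n as [|n IH]; [simpl; rewrite Rmult_0_r, exp_0; lra|].
  rewrite S_INR, Rmult_plus_distr_l, Rmult_1_r, exp_plus, <- tech_pow_Rmult.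
  pose proof (exp_pos t). pose proof (exp_pos (- t)). pose proof (cosh_bound t Ht).
  rewrite Rmult_comm. apply Rmult_le_compat; [apply pow_le | | | ]; lra.
Qed.

Lemma exp_lipschitz r s q : s - q <= r <= s + q -> Rabs (exp r - exp s) <= q * exp (s + q).
Proof.
  intros [Hsr Hrs]. pose proof (exp_pos r). pose proof (exp_pos s).
  assert (exp r <= exp (s + q)) by (apply exp_le_compat; lra).
  assert (exp s <= exp (s + q)) by (apply exp_le_compat; lra).
  destruct (Rle_dec s r).
  - rewrite Rabs_pos_eq by (pose proof (exp_le_compat s r ltac:(lra)); lra).
    pose proof (exp_diff_le r s ltac:(lra)).
    assert (0 <= (q - (r - s)) * exp r) by (apply Rmult_le_pos; lra).
    assert (0 <= q * (exp (s + q) - exp r)) by (apply Rmult_le_pos; lra).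
    nra.
  - rewrite Rabs_left1, Ropp_minus_distr by (pose proof (exp_le_compat r s ltac:(lra)); lra).
    pose proof (exp_diff_le s r ltac:(lra)).
    assert (0 <= (q - (s - r)) * exp s) by (apply Rmult_le_pos; lra).
    assert (0 <= q * (exp (s + q) - exp s)) by (apply Rmult_le_pos; lra).
    nra.
Qed.

Lemma odd_exp_translate a X v : 0 <= a -> 0 <= X ->
  (v + X) * exp (a * Rabs (v + X))
  <= v * exp (a * Rabs v) + 2 * X * exp (a * X) * (exp (2 * a * v) + exp (- (2 * a) * v)).
Proof.
  intros Ha HX.
  assert (Hup : Rabs (v + X) <= Rabs v + X).
  { eapply Rle_trans; [apply Rabs_triang|]. rewrite (Rabs_right X) by lra. lra. }
  assert (Hlow : Rabs v - X <= Rabs (v + X)).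
  { pose proof (Rabs_triang_inv v (- X)) as H.
    rewrite Rabs_Ropp, (Rabs_right X) in H by lra.
    replace (v - - X) with (v + X) in H by ring. exact H. }
  set (s := a * Rabs v). set (q := a * X). set (r := a * Rabs (v + X)).
  assert (Hs : 0 <= s) by (apply Rmult_le_pos; [lra | apply Rabs_pos]).
  assert (Hq : 0 <= q) by (apply Rmult_le_pos; lra).
  pose proof (exp_pos s). pose proof (exp_pos q). pose proof (Rabs_pos v).
  (* Since |r - s| <= q, changing |v| into |v + X| costs at most |v| q e^{s+q}. *)
  assert (Hdiff : v * (exp r - exp s) <= Rabs v * (q * exp (s + q))).
  { eapply Rle_trans; [apply Rle_abs|]. rewrite Rabs_mult.
    apply Rmult_le_compat_l; [lra|]. apply exp_lipschitz. unfold r, s, q. nra. }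
  (* |v| a e^s <= e^{2s}, from s <= e^s. *)
  assert (Hmix : Rabs v * (q * exp (s + q)) <= X * exp q * exp (2 * s)).
  { pose proof (exp_ineq1_le s).
    replace (exp (2 * s)) with (exp s * exp s) by (rewrite <- exp_plus; f_equal; ring).
    rewrite exp_plus.
    replace (Rabs v * (q * (exp s * exp q))) with (X * exp q * (s * exp s))
      by (unfold s, q; ring).
    apply Rmult_le_compat_l; [apply Rmult_le_pos; lra | nra]. }
  assert (Hfirst : X * exp r <= X * exp q * exp (2 * s)).
  { assert (exp r <= exp q * exp (2 * s))
      by (rewrite <- exp_plus; apply exp_le_compat; unfold r, s, q; nra).
    rewrite Rmult_assoc. apply Rmult_le_compat_l; lra. }
  assert (Htwo : exp (2 * s) <= exp (2 * a * v) + exp (- (2 * a) * v)).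
  { pose proof (exp_pos (2 * a * v)). pose proof (exp_pos (- (2 * a) * v)).
    unfold s. destruct (Rle_dec 0 v).
    - rewrite Rabs_right by lra. replace (2 * (a * v)) with (2 * a * v) by ring. lra.
    - rewrite Rabs_left by lra. replace (2 * (a * - v)) with (- (2 * a) * v) by ring. lra. }
  assert (0 <= X * exp q) by (apply Rmult_le_pos; lra).
  replace ((v + X) * exp r) with (v * exp s + v * (exp r - exp s) + X * exp r) by ring.
  fold q. nra.
Qed.

(* Free-walk bound for the odd function h(u) = u e^{a|u|} started at X >= 0:
   translating by X and using oddness, only the correction terms survive. *)
Lemma walk_sum_odd_exp a n X : 0 <= a -> (0 <= X)%Z ->
  walk_sum n (fun z => IZR z * exp (a * Rabs (IZR z))) X
  <= 4 * IZR X * exp (a * IZR X) * (exp (2 * a) + exp (- (2 * a))) ^ n.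
Proof.
  intros Ha HX. set (h := fun z => IZR z * exp (a * Rabs (IZR z))).
  set (Xr := IZR X). assert (HXr : 0 <= Xr) by (apply IZR_le; lia).
  set (cX := 2 * Xr * exp (a * Xr)).
  eapply Rle_trans.
  { apply (walk_sum_le n h (fun z => h (z + - X)%Z
        + cX * (exp (2 * a * IZR (z + - X)) + exp (- (2 * a) * IZR (z + - X))))).
    intros z. unfold h, cX.
    replace (IZR z) with (IZR (z + - X) + Xr) at 1 2
      by (unfold Xr; rewrite plus_IZR, opp_IZR; ring).
    apply odd_exp_translate; assumption. }
  rewrite walk_sum_add, walk_sum_scal, walk_sum_add, !(walk_sum_shift n _ (- X)).
  rewrite (walk_sum_shift n (fun z => exp (2 * a * IZR z)) (- X)).
  rewrite (walk_sum_shift n (fun z => exp (- (2 * a) * IZR z)) (- X)).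
  replace (X + - X)%Z with 0%Z by ring.
  rewrite walk_sum_center by (intros z; unfold h; replace (2 * 0 - z)%Z with (- z)%Z by ring;
    rewrite opp_IZR, Rabs_Ropp; ring).
  rewrite !walk_sum_exp, Ropp_involutive. simpl IZR. rewrite !Rmult_0_r, exp_0.
  rewrite (Rplus_comm (exp (- (2 * a)))). unfold cX. right. ring.
Qed.

(* The summand is e^{-a} h(y+1) with h(u) = u e^{a|u|}, and h(z+1) is
   antisymmetric about z = -1, so the method of images applies. *)
Lemma killed_sum_exp_moment a M n (x : nat) : 0 <= a -> (x + n <= M)%nat ->
  killed_sum n (Z.of_nat x) (fun y => (INR y + 1) * exp (a * INR y)) M
  <= 4 * (INR x + 1) * exp (a * INR x) * ((exp (2 * a) + exp (- (2 * a))) / 2) ^ n.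
Proof.
  intros Ha HM.
  set (h := fun z => IZR z * exp (a * Rabs (IZR z))).
  set (Psi := fun z => exp (- a) * h (z + 1)%Z).
  assert (HPsi : forall y : nat, Psi (Z.of_nat y) = (INR y + 1) * exp (a * INR y)).
  { intros y. unfold Psi, h. rewrite plus_IZR, <- INR_IZR_INZ.
    rewrite Rabs_right by (pose proof (pos_INR y); simpl; lra).
    replace (a * (INR y + 1)) with (a * INR y + a) by ring.
    rewrite exp_plus. replace (exp (- a)) with (/ exp a) by (symmetry; apply exp_Ropp).
    field. apply Rgt_not_eq, exp_pos. }
  transitivity (killed_sum n (Z.of_nat x) (fun y => Psi (Z.of_nat y)) M).
  { right. apply sum_eq. intros y _. rewrite HPsi. reflexivity. }
  rewrite killed_sum_images by
    (try lia; intros z; unfold Psi, h; replace (-2 - z + 1)%Z with (- (z + 1))%Z by ring;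
     rewrite opp_IZR, Rabs_Ropp; ring).
  unfold Psi. rewrite walk_sum_scal, walk_sum_shift.
  pose proof (walk_sum_odd_exp a n (Z.of_nat x + 1) Ha ltac:(lia)) as Hodd.
  fold h in Hodd. rewrite plus_IZR, <- INR_IZR_INZ in Hodd.
  assert (H2n : 0 < 2 ^ n) by (apply pow_lt; lra).
  set (E := exp (2 * a) + exp (- (2 * a))).
  replace ((E / 2) ^ n) with (E ^ n / 2 ^ n)
    by (unfold Rdiv; rewrite Rpow_mult_distr, pow_inv; reflexivity).
  replace (4 * (INR x + 1) * exp (a * INR x) * (E ^ n / 2 ^ n))
    with (exp (- a) * (4 * (INR x + 1) * exp (a * (INR x + 1)) * E ^ n) / 2 ^ n).
  - unfold Rdiv. apply Rmult_le_compat_r; [left; apply Rinv_0_lt_compat; exact H2n|].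
    apply Rmult_le_compat_l; [left; apply exp_pos | exact Hodd].
  - replace (a * (INR x + 1)) with (a * INR x + a) by ring.
    rewrite exp_plus. replace (exp (- a)) with (/ exp a) by (symmetry; apply exp_Ropp).
    field. split; [lra | apply Rgt_not_eq, exp_pos].
Qed.

Definition killed_weight (n x y : nat) : R := pkill n (Z.of_nat x) y * (INR y + 1).

Lemma path_sum_weighted N n x f : (n <= N)%nat ->
  path_sum N (Z.of_nat x) n f
  = 2 ^ n * sum_f_R0 (fun y => killed_weight n x y * npaths_per_site (N - n) y
                               * f (Z.of_nat y)) (x + n).
Proof.
  intros HN. rewrite (path_sum_kernel N n (Z.of_nat x) f (x + n)) by lia.
  f_equal. apply sum_eq. intros y _. unfold killed_weight, npaths_per_site.
  pose proof (pos_INR y). field. lra.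
Qed.

Lemma EN_exp_bound N n x a : (n <= N)%nat -> 0 <= a ->
  EN N x n (fun s => exp (a * IZR s))
  <= 4 * exp (a * INR x) * ((exp (2 * a) + exp (- (2 * a))) / 2) ^ n.
Proof.
  intros HN Ha. rewrite EN_path_sum.
  set (M := (x + n)%nat). set (w := killed_weight n x). set (l := npaths_per_site (N - n)).
  set (g := fun y => exp (a * INR y)).
  assert (HT : path_sum N (Z.of_nat x) n (fun s => exp (a * IZR s))
               = 2 ^ n * sum_f_R0 (fun y => w y * l y * g y) M).
  { rewrite path_sum_weighted by exact HN. f_equal. apply sum_eq. intros y _.
    unfold g. rewrite <- INR_IZR_INZ. reflexivity. }
  assert (HL : npaths N (Z.of_nat x) = 2 ^ n * sum_f_R0 (fun y => w y * l y) M).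
  { change (npaths N (Z.of_nat x)) with (path_sum N (Z.of_nat x) n (fun _ => 1)).
    rewrite path_sum_weighted by exact HN. f_equal. apply sum_eq. intros y _. unfold w, l. ring. }
  assert (Hw : sum_f_R0 w M = INR x + 1) by (apply killed_sum_linear; unfold M; lia).
  assert (Hwg : sum_f_R0 (fun y => w y * g y) M
                <= 4 * (INR x + 1) * exp (a * INR x)
                   * ((exp (2 * a) + exp (- (2 * a))) / 2) ^ n).
  { eapply Rle_trans; [|apply (killed_sum_exp_moment a M n x Ha); unfold M; lia].
    right. apply sum_eq. intros y _. unfold w, g, killed_weight. ring. }
  pose proof (npaths_ge_1 N (Z.of_nat x) ltac:(lia)) as HL1.
  assert (H2n : 0 < 2 ^ n) by (apply pow_lt; lra).
  pose proof (pos_INR x).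
  rewrite HT, HL.
  replace (2 ^ n * sum_f_R0 (fun y => w y * l y * g y) M / (2 ^ n * sum_f_R0 (fun y => w y * l y) M))
    with (sum_f_R0 (fun y => w y * l y * g y) M / sum_f_R0 (fun y => w y * l y) M)
    by (field; split; nra).
  eapply Rle_trans; [apply chebyshev_ratio|].
  - intros i _. unfold w, killed_weight. apply Rmult_le_pos;
      [apply pkill_nonneg; lia | pose proof (pos_INR i); lra].
  - intros i j Hij _. apply npaths_per_site_antitone. exact Hij.
  - intros i j Hij _. unfold g. apply exp_le_compat.
    apply Rmult_le_compat_l; [lra | apply le_INR; exact Hij].
  - lra.
  - nra.
  - rewrite Hw. apply (Rmult_le_reg_r (INR x + 1)); [lra|].
    replace (sum_f_R0 (fun y => w y * g y) M / (INR x + 1) * (INR x + 1))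
      with (sum_f_R0 (fun y => w y * g y) M) by (field; lra).
    eapply Rle_trans; [exact Hwg|]. right. ring.
Qed.

Theorem proposition3p7 :
  exists C K : R, 0 < C /\ 0 < K /\
    forall (x N n : nat) (a : R),
      (n <= N)%nat -> 0 <= a ->
      infinite_sum (fun y : nat => pfrak N n x y * exp (a * INR y))
                   (EN N x n (fun s => exp (a * IZR s))) /\
      EN N x n (fun s => exp (a * IZR s))
        <= C * exp (a * INR x + K * a ^ 2 * INR n).
Proof.
  exists 4, 8. split; [lra|]. split; [lra|].
  intros x N n a HN Ha. split.
  - (* The partial sums are constant from y = x + n on. *)
    intros eps Heps. exists (x + n)%nat. intros m Hm.
    rewrite (sum_eq _ (fun y => pfrak N n x y * exp (a * IZR (Z.of_nat y))))
      by (intros y _; rewrite <- INR_IZR_INZ; reflexivity).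
    pose proof (pfrak_partial_sum N n x (fun s => exp (a * IZR s)) m HN ltac:(lia)) as Hpartial.
    cbv beta in Hpartial. rewrite Hpartial. unfold R_dist. rewrite Rminus_diag, Rabs_R0. exact Heps.
  - eapply Rle_trans; [apply EN_exp_bound; assumption|].
    rewrite exp_plus, Rmult_assoc. apply Rmult_le_compat_l; [lra|].
    apply Rmult_le_compat_l; [left; apply exp_pos|].
    replace (8 * a ^ 2 * INR n) with (2 * (2 * a) ^ 2 * INR n) by ring.
    apply cosh_pow_bound. lra.
Qed.
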